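(* There is an absolute constant $c>0$ such that the following holds. Let $n\ge1$, $\alpha\in(0,1)$, $\beta\in(0,1/2)$, $\gamma=\sqrt\beta$, and let $D\ge D_0:=\sqrt{\alpha n}$. Let $$\mathcal{S}_D=\{x\in S^{n-1}: \mathrm{LCD}_{\alpha,\beta}(x)\in[D,2D]\text{ and } x \text{ is }(\alpha,\gamma)\text{-incompressible}\},$$ and $\nu=6\beta\sqrt n/D$. Then there exists a set $\mathcal{N}_D\subset\mathcal{S}_D$ such that every $x\in\mathcal{S}_D$ has some $y\in\mathcal{N}_D$ with $\|x-y\|_2\le\nu$, and $$|\mathcal{N}_D|\le\frac{D}{\beta}\left(\frac{cD}{\sqrt{\alpha n}}\right)^n\left(\frac1\beta\right)^{\alpha n}.$$
   Context: For $y\in\mathbb{R}^n$ write $y=[y]+\{y\}$ with $[y]\in\mathbb{Z}^n$ and $\{y\}\in[-1/2,1/2]^n$ (coordinatewise nearest-integer rounding). For $\alpha,\gamma\in(0,1)$, a unit vector $x\in S^{n-1}$ is $(\alpha,\gamma)$-compressible if $x=u+v$ where $u$ has at most $\alpha n$ nonzero coordinates and $\|v\|_2\le\gamma$; otherwise $x$ is $(\alpha,\gamma)$-incompressible. For $x\in S^{n-1}$, $\mathrm{LCD}_{\alpha,\beta}(x)$ is the infimum of all $D>0$ such that $\{Dx\}=u+v$ with $u$ having at most $\alpha n$ nonzero coordinates and $\|v\|_2\le\beta\min(D,\sqrt n)$ (infimum of the empty set being $+\infty$). *)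

From HB Require Import structures.
From mathcomp Require Import all_boot all_order all_algebra.
From mathcomp Require Import all_classical all_reals all_analysis.
Set Implicit Arguments. Unset Strict Implicit. Unset Printing Implicit Defensive.
Import Order.TTheory GRing.Theory Num.Theory.
Local Open Scope ring_scope.

Definition norm2 {R : realType} {n : nat} (x : 'rV[R]_n) : R :=
  Num.sqrt (\sum_(i < n) x ord0 i ^+ 2).

Definition nnz {R : realType} {n : nat} (u : 'rV[R]_n) : nat :=
  #|[set i : 'I_n | u ord0 i != 0]|.

(* Nearest integer rounding [y] := floor (y + 1/2), fractional part
   {y} := y - [y] in [-1/2, 1/2). *)
Definition rnd {R : realType} (y : R) : R := (Num.floor (y + 2^-1))%:~R.
Definition fracv {R : realType} {n : nat} (x : 'rV[R]_n) : 'rV[R]_n :=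
  \row_i (x ord0 i - rnd (x ord0 i)).

Definition on_sphere {R : realType} {n : nat} (x : 'rV[R]_n) : Prop :=
  norm2 x = 1.

Definition compressible {R : realType} {n : nat} (alpha gamma : R)
    (x : 'rV[R]_n) : Prop :=
  exists u v : 'rV[R]_n, x = u + v /\ (nnz u)%:R <= alpha * n%:R /\
                         norm2 v <= gamma.

Definition incompressible {R : realType} {n : nat} (alpha gamma : R)
    (x : 'rV[R]_n) : Prop := on_sphere x /\ ~ compressible alpha gamma x.

Definition lcd_set {R : realType} {n : nat} (alpha beta : R) (x : 'rV[R]_n)
    : set R :=
  [set D | 0 < D /\ exists u v : 'rV[R]_n,
     fracv (D *: x) = u + v /\ (nnz u)%:R <= alpha * n%:R /\
     norm2 v <= beta * Num.min D (Num.sqrt n%:R)].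

(* LCD_{alpha,beta}(x) as an extended real; inf of the empty set is +oo *)
Definition LCD {R : realType} {n : nat} (alpha beta : R) (x : 'rV[R]_n)
    : \bar R :=
  ereal_inf [set D%:E | D in lcd_set alpha beta x].

Definition S_D {R : realType} {n : nat} (alpha beta D : R) (x : 'rV[R]_n)
    : Prop :=
  [/\ on_sphere x, (D%:E <= LCD alpha beta x)%E,
      (LCD alpha beta x <= (2 * D)%:E)%E &
      incompressible alpha (Num.sqrt beta) x].

From HB Require Import structures.
From mathcomp Require Import all_boot all_order all_algebra.
From mathcomp Require Import all_classical all_reals all_analysis.
From mathcomp Require Import ring lra zify.
Set Implicit Arguments. Unset Strict Implicit. Unset Printing Implicit Defensive.
Import Order.TTheory GRing.Theory Num.Theory.
Local Open Scope ring_scope.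

(* Fix x in S_D and an LCD witness D' in [D, 3D), so that {D' x} = u + v with u supported on at
   most alpha n coordinates and |v| <= beta sqrt n.  Rounding D' x to the nearest integer vector q,
   and rounding the part of {D' x} on the support of u to the lattice beta Z, gives a point
   q + beta k within 3/2 beta sqrt n of D' x, where |q|_1 <= 3 D sqrt n + n and k has at most
   alpha n nonzero entries, each of size about 1 / beta.  After normalization, x lies within
   3 beta sqrt n / D of (q + beta k) / |q + beta k|.  The pairs (q, k) are counted by Rankin's
   trick, and replacing each centre by a nearby point of S_D doubles the radius.  For D < 1/4
   the set S_D is empty: an LCD below 1/2 makes x compressible. *)

Section Norm2.
Context {R : realType} {n : nat}.
Implicit Types (a b x : 'rV[R]_n) (c e t : R).

Lemma sumsq_ge0 a : 0 <= \sum_(i < n) a ord0 i ^+ 2.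
Proof. by apply: sumr_ge0 => i _; rewrite sqr_ge0. Qed.

Lemma norm2_ge0 a : 0 <= norm2 a.
Proof. exact: sqrtr_ge0. Qed.

Lemma sqr_norm2 a : norm2 a ^+ 2 = \sum_(i < n) a ord0 i ^+ 2.
Proof. by rewrite /norm2 sqr_sqrtr // sumsq_ge0. Qed.

Lemma sumsq_eq0 a : \sum_(i < n) a ord0 i ^+ 2 = 0 -> forall i, a ord0 i = 0.
Proof.
move=> h i; apply/eqP; rewrite -sqrf_eq0; apply/eqP.
by apply: (psumr_eq0P (P := predT) _ h) => // j _; rewrite sqr_ge0.
Qed.

Lemma cauchy_schwarz a b : (\sum_(i < n) a ord0 i * b ord0 i) ^+ 2 <=
  (\sum_(i < n) a ord0 i ^+ 2) * (\sum_(i < n) b ord0 i ^+ 2).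
Proof.
set A := \sum_(i < n) a ord0 i ^+ 2; set B := \sum_(i < n) b ord0 i ^+ 2.
set d := \sum_(i < n) a ord0 i * b ord0 i.
have [A0|An0] := eqVneq A 0.
  have -> : d = 0 by rewrite /d big1 // => i _; rewrite (sumsq_eq0 A0) mul0r.
  by rewrite expr0n /= mulr_ge0 ?sumsq_ge0.
have Ap : 0 < A by rewrite lt_def An0 sumsq_ge0.
(* discriminant of the nonnegative quadratic t |-> sum_i (a_i t + b_i)^2 at t = - d / A *)
have quad t : \sum_(i < n) (a ord0 i * t + b ord0 i) ^+ 2 = A * t ^+ 2 + 2 * d * t + B.
  rewrite /A /d /B mulr_sumr !mulr_suml -!big_split /=.
  by apply: eq_bigr => i _; ring.
have : 0 <= A * (- d / A) ^+ 2 + 2 * d * (- d / A) + B.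
  by rewrite -quad sumr_ge0 // => i _; rewrite sqr_ge0.
have -> : A * (- d / A) ^+ 2 + 2 * d * (- d / A) + B = B - d ^+ 2 / A by field.
by rewrite subr_ge0 ler_pdivrMr // mulrC.
Qed.

Lemma dot_le_norm2 a b : \sum_(i < n) a ord0 i * b ord0 i <= norm2 a * norm2 b.
Proof.
apply: le_trans (ler_norm _) _.
rewrite -sqrtr_sqr /norm2 -sqrtrM ?sumsq_ge0 //.
by rewrite ler_sqrt ?mulr_ge0 ?sumsq_ge0 // cauchy_schwarz.
Qed.

Lemma ler_norm2D a b : norm2 (a + b) <= norm2 a + norm2 b.
Proof.
rewrite -(ler_pXn2r (n := 2)) ?nnegrE ?addr_ge0 ?norm2_ge0 //.
have -> : norm2 (a + b) ^+ 2 =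
    norm2 a ^+ 2 + 2 * (\sum_(i < n) a ord0 i * b ord0 i) + norm2 b ^+ 2.
  rewrite !sqr_norm2 mulr_sumr -!big_split /=.
  by apply: eq_bigr => i _; rewrite mxE; ring.
rewrite sqrrD lerD2r lerD2l mulr2n; have := dot_le_norm2 a b; lra.
Qed.

Lemma norm2Z c a : norm2 (c *: a) = `|c| * norm2 a.
Proof.
rewrite /norm2 -sqrtr_sqr -sqrtrM ?sqr_ge0 // mulr_sumr; congr Num.sqrt.
by apply: eq_bigr => i _; rewrite mxE exprMn.
Qed.

Lemma norm2_distC a b : norm2 (a - b) = norm2 (b - a).
Proof. by rewrite -opprB -scaleN1r norm2Z normrN normr1 mul1r. Qed.

Lemma ler_dist_norm2 a b : `|norm2 a - norm2 b| <= norm2 (a - b).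
Proof.
have h1 := ler_norm2D (a - b) b; have h2 := ler_norm2D (b - a) a.
rewrite !subrK in h1 h2; rewrite norm2_distC in h2.
by rewrite ler_norml; apply/andP; split; lra.
Qed.

Lemma norm2_le_coord a b : (forall i, `|a ord0 i| <= `|b ord0 i|) -> norm2 a <= norm2 b.
Proof.
move=> h; rewrite /norm2 ler_sqrt ?sumsq_ge0 //; apply: ler_sum => i _.
by rewrite -(real_normK (num_real (a ord0 i))) -(real_normK (num_real (b ord0 i))) lerXn2r ?nnegrE.
Qed.

Lemma norm2_abs a : norm2 (\row_i `|a ord0 i|) = norm2 a.
Proof.
by rewrite /norm2; congr Num.sqrt; apply: eq_bigr => i _; rewrite mxE real_normK ?num_real.
Qed.

Lemma norm2_const c : norm2 (\row_(i < n) c) = `|c| * Num.sqrt n%:R.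
Proof.
rewrite /norm2 (eq_bigr (fun _ => c ^+ 2)) => [|i _]; last by rewrite mxE.
by rewrite sumr_const card_ord -[_ *+ n]mulr_natr sqrtrM ?sqr_ge0 // sqrtr_sqr.
Qed.

Lemma coord_le_norm2 a i : `|a ord0 i| <= norm2 a.
Proof.
rewrite -sqrtr_sqr /norm2 ler_sqrt ?sumsq_ge0 //.
by rewrite (bigD1 i) //= lerDl sumr_ge0 // => j _; rewrite sqr_ge0.
Qed.

Lemma sum_abs_le_norm2 a : \sum_(i < n) `|a ord0 i| <= Num.sqrt n%:R * norm2 a.
Proof.
have := dot_le_norm2 (\row_i `|a ord0 i|) (\row_(i < n) 1).
rewrite norm2_abs norm2_const normr1 mul1r mulrC.
by under eq_bigr do rewrite !mxE mulr1.
Qed.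

Lemma norm2_sub_normalize x a t e : norm2 x = 1 -> 0 < t ->
  norm2 (x - t^-1 *: a) <= e -> norm2 (x - (norm2 a)^-1 *: a) <= 2 * e.
Proof.
move=> x1 t0 h; have e0 : 0 <= e := le_trans (norm2_ge0 _) h.
have -> : x - (norm2 a)^-1 *: a = (x - t^-1 *: a) + (t^-1 - (norm2 a)^-1) *: a.
  by rewrite scalerBl addrA subrK.
apply: le_trans (ler_norm2D _ _) _; rewrite mulr_natl mulr2n; apply: lerD => //; rewrite norm2Z.
have [->|a0] := eqVneq (norm2 a) 0; first by rewrite mulr0.
have -> : `|t^-1 - (norm2 a)^-1| * norm2 a = `|norm2 (t^-1 *: a) - norm2 x|.
  rewrite norm2Z x1 (@gtr0_norm _ t^-1) ?invr_gt0 //.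
  have -> : t^-1 * norm2 a - 1 = (t^-1 - (norm2 a)^-1) * norm2 a by rewrite mulrBl mulVf.
  by rewrite normrM (ger0_norm (norm2_ge0 a)).
by apply: le_trans (ler_dist_norm2 _ _) _; rewrite norm2_distC.
Qed.

End Norm2.

Section Rounding.
Context {R : realType}.
Implicit Types (beta t y : R).

Lemma rnd_bounds y : y - 2^-1 < rnd y <= y + 2^-1.
Proof.
rewrite /rnd; have := floor_le (y + 2^-1); have := floorD1_gt (y + 2^-1).
by rewrite intrD; set f := _%:~R => h1 h2; apply/andP; split; lra.
Qed.

Lemma abs_sub_rnd_le y : `|y - rnd y| <= 2^-1.
Proof. by have /andP[h1 h2] := rnd_bounds y; rewrite ler_norml; apply/andP; split; lra. Qed.

Lemma abs_rnd_le y : `|rnd y| <= `|y| + 2^-1.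
Proof.
have -> : rnd y = y - (y - rnd y) by rewrite opprB addrC subrK.
by apply: le_trans (ler_normB _ _) _; rewrite lerD2l abs_sub_rnd_le.
Qed.

Lemma abs_sub_scaled_rnd_le beta t : 0 < beta -> `|t - beta * rnd (t / beta)| <= beta / 2.
Proof.
move=> b0; have -> : t - beta * rnd (t / beta) = beta * (t / beta - rnd (t / beta)).
  by rewrite mulrBr mulrCA mulfV ?gt_eqF ?mulr1.
by rewrite normrM gtr0_norm // ler_pM2l // abs_sub_rnd_le.
Qed.

Definition fine_bound beta : nat := (Num.truncn beta^-1).+1.

Lemma abs_scaled_rnd_le beta t : 0 < beta <= 1 -> `|t| <= 2^-1 ->
  `|rnd (t / beta)| <= (fine_bound beta)%:R.
Proof.
move=> /andP[b0 b1] ht; apply: le_trans (abs_rnd_le _) _.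
have hK := truncnS_gt beta^-1.
have bi1 : 1 <= beta^-1 by rewrite invf_ge1.
have : `|t / beta| <= 2^-1 * beta^-1.
  by rewrite normrM (@gtr0_norm _ beta^-1) ?invr_gt0 // ler_pM2r ?invr_gt0.
by rewrite /fine_bound; lra.
Qed.

End Rounding.

Definition zigzag (j : nat) : int := if odd j then (uphalf j)%:Z else - (uphalf j)%:Z.
Definition unzigzag (z : int) : nat := if 0 < z then (`|z|%N.*2).-1 else `|z|%N.*2.

Lemma abs_zigzag j : `|zigzag j|%N = uphalf j.
Proof. by rewrite /zigzag; case: (odd j) => //=; rewrite abszN. Qed.

Lemma unzigzagK : cancel unzigzag zigzag.
Proof.
move=> z; rewrite /unzigzag /zigzag; case: ltrP => hz.
  have [k hk] : exists k, `|z|%N = k.+1 by exists `|z|.-1; rewrite prednK // absz_gt0 gt_eqF.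
  have -> : (`|z|%N.*2).-1 = (k.*2).+1 by rewrite hk doubleS.
  by rewrite !uphalfE -doubleS doubleK oddS odd_double /= -hk gtz0_abs.
by rewrite odd_double /= uphalf_double lez0_abs // opprK.
Qed.

Lemma uphalf_unzigzag z : uphalf (unzigzag z) = `|z|%N.
Proof. by rewrite -abs_zigzag unzigzagK. Qed.

Lemma unzigzag_eq0 z : (unzigzag z == 0%N) = (z == 0).
Proof.
apply/idP/idP => [/eqP z0|/eqP ->] //.
by rewrite -absz_eq0 -uphalf_unzigzag z0.
Qed.

Lemma unzigzag_lt z M : (`|z| <= M)%N -> (unzigzag z < 2 * M + 1)%N.
Proof. by rewrite /unzigzag -!mul2n; case: ifP => _ h; lia. Qed.

(* A code records, for each coordinate, a coarse integer of size at most [M] and a fine integer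
   of size at most [K], both stored through [unzigzag]. *)
Definition lattice_code (n M K : nat) := {ffun 'I_n -> 'I_(2 * M + 1) * 'I_(2 * K + 1)}.

Definition lattice_codes (n M K S : nat) : {set lattice_code n M K} :=
  [set p : lattice_code n M K | (\sum_(i < n) uphalf (p i).1 <= M)%N &&
     (#|[set i | nat_of_ord (p i).2 != 0%N]| <= S)%N].

Section Counting.
Context {R : realType}.

Lemma sum_expr_uphalf (r : R) M :
  (1 - r) * \sum_(j < 2 * M + 1) r ^+ uphalf j = 1 + r - 2 * r ^+ M.+1.
Proof.
rewrite -(big_mkord xpredT (fun j => r ^+ uphalf j)); elim: M => [|M IH].
  by rewrite big_nat1 /= expr0 expr1 mulr1; ring.
have -> : (2 * M.+1 + 1 = (2 * M + 1).+2)%N by lia.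
rewrite big_nat_recr //= big_nat_recr //= !mulrDr IH.
have -> : uphalf (2 * M + 1) = M.+1 by rewrite uphalfE addn1 mul2n -doubleS doubleK.
have -> : ((2 * M + 1)./2.+1 = M.+1)%N by rewrite addn1 mul2n -uphalfE uphalf_double.
by rewrite !exprS; ring.
Qed.

Lemma sum_expr_uphalf_le (r : R) M : 0 <= r < 1 ->
  \sum_(j < 2 * M + 1) r ^+ uphalf j <= (1 + r) / (1 - r).
Proof.
move=> /andP[r0 r1]; have r1' : 0 < 1 - r by lra.
rewrite ler_pdivlMr // mulrC sum_expr_uphalf lerBlDr lerDl.
by rewrite mulr_ge0 // exprn_ge0.
Qed.

(* Rankin's trick: weight a code by [r] per unit of coarse size and by [1 / (2 K)] per nonzero
   fine entry; every code of [lattice_codes n M K S] has weight at least [r ^+ M * (2 K) ^- S],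
   while the total weight factorizes over the coordinates. *)
Definition code_weight (r s : R) {M K : nat} (j : 'I_(2 * M + 1) * 'I_(2 * K + 1)) : R :=
  r ^+ uphalf j.1 * (if nat_of_ord j.2 != 0%N then s else 1).

Lemma sum_code_weight_le (r : R) M K : 0 <= r < 1 -> (0 < K)%N ->
  \sum_(j : 'I_(2 * M + 1) * 'I_(2 * K + 1)) code_weight r (2 * K)%:R^-1 j <=
  2 * ((1 + r) / (1 - r)).
Proof.
move=> r01 K0; set s : R := (2 * K)%:R^-1.
have -> : \sum_(j : 'I_(2 * M + 1) * 'I_(2 * K + 1)) code_weight r s j =
    (\sum_(j1 < 2 * M + 1) r ^+ uphalf j1) *
    \sum_(j2 < 2 * K + 1) (if nat_of_ord j2 != 0%N then s else 1).
  rewrite -(pair_bigA _ (fun (j1 : 'I_(2 * M + 1)) (j2 : 'I_(2 * K + 1)) =>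
    code_weight r s (j1, j2))) mulr_suml.
  by apply: eq_bigr => j1 _; rewrite mulr_sumr.
rewrite mulrC ler_pM // ?sum_expr_uphalf_le //.
- by apply: sumr_ge0 => j _; case: ifP; rewrite ?invr_ge0.
- by apply: sumr_ge0 => j _; rewrite exprn_ge0 //; case/andP: r01.
have -> : (2 * K + 1 = (2 * K).+1)%N by lia.
rewrite big_ord_recl /= (eq_bigr (fun _ => (2 * K)%:R^-1)) // sumr_const card_ord.
by rewrite -[_ *+ (2 * K)]mulr_natr mulVf ?pnatr_eq0 -?lt0n ?muln_gt0.
Qed.

Lemma card_codes_le_weighted n M K S (r : R) : 0 < r < 1 -> (0 < K)%N ->
  #|lattice_codes n M K S|%:R <=
  (r^-1) ^+ M * ((2 * K)%:R) ^+ S * (2 * ((1 + r) / (1 - r))) ^+ n.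
Proof.
move=> /andP[r0 r1] K0.
set s : R := (2 * K)%:R^-1; set g := @code_weight r s M K.
have Kp : 0 < (2 * K)%:R :> R by rewrite ltr0n muln_gt0.
have s0 : 0 <= s by rewrite invr_ge0 ltW.
have g0 j : 0 <= g j by rewrite mulr_ge0 ?exprn_ge0 ?(ltW r0) //; case: ifP.
set W := (r^-1) ^+ M * ((2 * K)%:R) ^+ S.
have W0 : 0 <= W by rewrite mulr_ge0 // exprn_ge0 // ?invr_ge0 ltW.
have weight_ge p : p \in lattice_codes n M K S -> 1 <= W * \prod_i g (p i).
  rewrite inE => /andP[h1 h2].
  rewrite /g /code_weight big_split /= prodrXr -big_mkcond /=.
  have -> : \prod_(i < n | nat_of_ord (p i).2 != 0%N) s =
            s ^+ #|[set i | nat_of_ord (p i).2 != 0%N]|.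
    by rewrite -prodr_const; apply: eq_bigl => i; rewrite inE.
  apply: (@le_trans _ _ (W * (r ^+ M * s ^+ S))).
    rewrite /W /s mulrACA -!exprMn mulVf ?gt_eqF // mulfV ?gt_eqF //.
    by rewrite !expr1n mulr1.
  rewrite ler_wpM2l //; apply: ler_pM; rewrite ?exprn_ge0 ?(ltW r0) //.
    exact: ler_wiXn2l (ltW r0) (ltW r1) _ _ h1.
  apply: ler_wiXn2l h2 => //; by rewrite invf_le1 // ler1n muln_gt0.
apply: (@le_trans _ _ (\sum_(p in lattice_codes n M K S) W * \prod_i g (p i))).
  by rewrite -sumr_const; apply: ler_sum.
apply: (@le_trans _ _ (\sum_(p : lattice_code n M K) W * \prod_i g (p i))).
  rewrite [X in _ <= X](bigID (mem (lattice_codes n M K S))) /= lerDl.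
  by apply: sumr_ge0 => p _; rewrite mulr_ge0 // prodr_ge0.
rewrite -mulr_sumr ler_wpM2l // -(bigA_distr_bigA (fun (i : 'I_n) j => g j)) /=.
rewrite prodr_const card_ord lerXn2r ?nnegrE ?sumr_ge0 ?sum_code_weight_le ?(ltW r0) //.
by rewrite mulr_ge0 // divr_ge0; lra.
Qed.

End Counting.

Section LCD.
Context {R : realType} {n : nat}.
Implicit Types (alpha beta : R) (x : 'rV[R]_n).

Lemma LCD_lt_witness alpha beta x B : (LCD alpha beta x < B%:E)%E ->
  exists2 D, lcd_set alpha beta x D & D < B.
Proof. by move=> /ereal_inf_lt[_ [D hD <-]]; rewrite lte_fin; exists D. Qed.

Lemma LCD_le alpha beta x D : lcd_set alpha beta x D -> (LCD alpha beta x <= D%:E)%E.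
Proof. by move=> hD; apply: ereal_inf_lbound; exists D. Qed.

Lemma nnzZ (c : R) (u : 'rV[R]_n) : c != 0 -> nnz (c *: u) = nnz u.
Proof. by move=> c0; apply: eq_card => i; rewrite !inE mxE mulf_eq0 negb_or c0. Qed.

Lemma ler_sqrtr_self (b : R) : 0 <= b <= 1 -> b <= Num.sqrt b.
Proof.
move=> /andP[b0 b1]; rewrite -{1}(ger0_norm b0) -sqrtr_sqr ler_sqrt ?sqr_ge0 //.
by rewrite expr2 ler_piMr.
Qed.

(* For [D < 1/2] and a unit [x], the vector [D x] has no integer part, so an LCD witness
   below [1/2] is a sparse-plus-small decomposition of [x] itself. *)
Lemma compressible_of_LCD_lt_half alpha beta x : on_sphere x -> 0 < beta <= 1 ->
  (LCD alpha beta x < (2^-1)%:E)%E -> compressible alpha (Num.sqrt beta) x.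
Proof.
move=> x1 /andP[b0 b1] /LCD_lt_witness[D [D0 [u [v [ef [hu hv]]]]] D_lt].
have frac_id : fracv (D *: x) = D *: x.
  apply/rowP => i; rewrite !mxE /rnd.
  have : `|D * x ord0 i| <= D by rewrite normrM gtr0_norm // ger_pMr // -x1 coord_le_norm2.
  rewrite ler_norml => /andP[h1 h2].
  by rewrite (@floor_def _ _ 0) ?subr0 //= add0r; apply/andP; split; lra.
exists (D^-1 *: u), (D^-1 *: v); split; [|split].
- by rewrite -scalerDr -ef frac_id scalerA mulVf ?gt_eqF // scale1r.
- by rewrite nnzZ // invr_eq0 gt_eqF.
rewrite norm2Z gtr0_norm ?invr_gt0 // ler_pdivrMl //.
apply: le_trans hv _; rewrite mulrC ler_pM ?(ltW b0) ?ge_min ?lexx //.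
  by rewrite le_min (ltW D0) sqrtr_ge0.
by apply: ler_sqrtr_self; apply/andP; split; lra.
Qed.

End LCD.

Lemma S_D_small {R : realType} n (alpha beta D : R) (x : 'rV[R]_n) :
  0 < beta < 2^-1 -> D < 4^-1 -> ~ S_D alpha beta D x.
Proof.
move=> /andP[b0 b1] hD [x1 _ hi [_ ninc]]; apply: ninc.
apply: compressible_of_LCD_lt_half => //; first by apply/andP; split; lra.
by apply: le_lt_trans hi _; rewrite lte_fin; lra.
Qed.

Section Lattice.
Context {R : realType} {n : nat}.

Lemma lattice_point (beta : R) (y u v : 'rV[R]_n) : 0 < beta < 2^-1 -> fracv y = u + v ->
  exists q k : 'I_n -> int,
  [/\ forall i, `|(q i)%:~R| <= `|y ord0 i| + 2^-1,
      forall i, u ord0 i = 0 -> k i = 0,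
      forall i, (`|k i| <= fine_bound beta)%N &
      norm2 (y - \row_i ((q i)%:~R + beta * (k i)%:~R)) <= norm2 v + beta / 2 * Num.sqrt n%:R].
Proof.
move=> /andP[b0 b1] ef.
have frac_uv i : y ord0 i - rnd (y ord0 i) = u ord0 i + v ord0 i.
  by have := congr1 (fun w : 'rV[R]_n => w ord0 i) ef; rewrite !mxE.
pose k i := if u ord0 i != 0
  then Num.floor ((y ord0 i - rnd (y ord0 i)) / beta + 2^-1) else 0.
exists (fun i => Num.floor (y ord0 i + 2^-1)), k; split => [i|i ui|i|].
- exact: abs_rnd_le.
- by rewrite /k ui eqxx.
- rewrite /k; case: ifP => _ //.
  rewrite -(ler_nat R) natr_absz intr_norm abs_scaled_rnd_le ?abs_sub_rnd_le //.
  by apply/andP; split; lra.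
have b2 : 0 <= beta / 2 by rewrite divr_ge0 ?ltW.
apply: le_trans (_ : norm2 (\row_i `|v ord0 i| + \row_(i < n) (beta / 2)) <= _).
  apply: norm2_le_coord => i.
  rewrite !mxE -/(rnd (y ord0 i)) [X in _ <= X]ger0_norm ?addr_ge0 //.
  rewrite opprD addrA /k; case: ifP => [_|/negbFE/eqP ui].
    by rewrite -/(rnd _) ler_wpDl // abs_sub_scaled_rnd_le.
  by rewrite mulr0 subr0 frac_uv ui add0r lerDl.
by apply: le_trans (ler_norm2D _ _) _; rewrite norm2_abs norm2_const ger0_norm.
Qed.

End Lattice.

Definition coarse_bound {R : realType} (D : R) n : nat :=
  Num.truncn (3 * D * Num.sqrt n%:R + n%:R).
Definition support_bound {R : realType} (alpha : R) n : nat := Num.truncn (alpha * n%:R).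

Section Approximation.
Context {R : realType} {n : nat}.

Definition code_vec {M K : nat} (beta : R) (p : lattice_code n M K) : 'rV[R]_n :=
  \row_i ((zigzag (p i).1)%:~R + beta * (zigzag (p i).2)%:~R).
Definition code_point {M K : nat} (beta : R) (p : lattice_code n M K) : 'rV[R]_n :=
  (norm2 (code_vec beta p))^-1 *: code_vec beta p.

Lemma S_D_near_code (alpha beta D : R) (x : 'rV[R]_n) :
  0 < beta < 2^-1 -> 0 < D -> S_D alpha beta D x ->
  exists2 p,
    p \in lattice_codes n (coarse_bound D n) (fine_bound beta) (support_bound alpha n) &
    norm2 (x - code_point beta p) <= 3 * beta * Num.sqrt n%:R / D.
Proof.
move=> hb D0 [x1 lo hi _]; have /andP[b0 b1] := hb.
have [D' hD' D'_lt] : exists2 D', lcd_set alpha beta x D' & D' < 3 * D.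
  by apply: LCD_lt_witness; apply: le_lt_trans hi _; rewrite lte_fin; lra.
have D_le : D <= D' by rewrite -lee_fin (le_trans lo (LCD_le hD')).
case: hD' => D'0 [u [v [ef [hu hv]]]].
have [q [k [hq hk0 hk hd]]] := lattice_point hb ef.
have sn0 : 0 <= Num.sqrt n%:R :> R := sqrtr_ge0 _.
have q_sum : (\sum_i `|q i| <= coarse_bound D n)%N.
  rewrite /coarse_bound truncn_ge_nat; last by rewrite addr_ge0 ?mulr_ge0 // ?ltW.
  rewrite natr_sum; under eq_bigr do rewrite natr_absz intr_norm.
  apply: le_trans (ler_sum _ (fun i _ => hq i)) _.
  rewrite big_split sumr_const card_ord /= -[_ *+ n]mulr_natr.
  have := sum_abs_le_norm2 (D' *: x); rewrite norm2Z x1 gtr0_norm // mulr1.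
  under eq_bigr do rewrite mxE.
  have : D' * Num.sqrt n%:R <= 3 * D * Num.sqrt n%:R by rewrite ler_wpM2r // ltW.
  have : 0 <= n%:R :> R := ler0n _ _.
  lra.
have q_le i : (`|q i| <= coarse_bound D n)%N.
  by apply: leq_trans q_sum; rewrite (bigD1 i) //= leq_addr.
pose p : lattice_code n _ _ :=
  [ffun i => (Ordinal (unzigzag_lt (q_le i)), Ordinal (unzigzag_lt (hk i)))].
have p_vec : code_vec beta p = \row_i ((q i)%:~R + beta * (k i)%:~R).
  by apply/rowP => i; rewrite !mxE ffunE /= !unzigzagK.
exists p.
  rewrite inE; apply/andP; split.
    by rewrite (eq_bigr (fun i => `|q i|%N)) // => i _; rewrite ffunE uphalf_unzigzag.
  apply: (@leq_trans (nnz u)); last by rewrite truncn_ge_nat // (le_trans (ler0n _ _) hu).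
  apply: subset_leq_card; apply/fintype.subsetP => i; rewrite !inE ffunE /= unzigzag_eq0.
  by apply: contraNneq => ui; rewrite hk0.
set a := \row_i _ in hd p_vec; rewrite /code_point p_vec.
have hv' : norm2 v <= beta * Num.sqrt n%:R.
  by apply: le_trans hv _; rewrite ler_wpM2l ?(ltW b0) // ge_min lexx orbT.
have e0 : 0 <= 3 / 2 * beta * Num.sqrt n%:R by apply: mulr_ge0 => //; lra.
have close : norm2 (x - D'^-1 *: a) <= 3 / 2 * beta * Num.sqrt n%:R / D.
  have -> : x - D'^-1 *: a = D'^-1 *: (D' *: x - a).
    by rewrite scalerBr scalerA mulVf ?gt_eqF // scale1r.
  rewrite norm2Z gtr0_norm ?invr_gt0 // mulrC.
  apply: (@le_trans _ _ (3 / 2 * beta * Num.sqrt n%:R / D')).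
    by rewrite ler_pM2r ?invr_gt0 //; apply: le_trans hd _; lra.
  by rewrite ler_wpM2l // lef_pV2 ?posrE.
apply: le_trans (norm2_sub_normalize x1 D'0 close) _.
by rewrite !mulrA; lra.
Qed.

End Approximation.

Lemma net_of_cover {R : realType} n (T : finType) (P : {set T}) (c : T -> 'rV[R]_n)
    (S : 'rV[R]_n -> Prop) (e : R) :
  (forall x, S x -> exists2 p, p \in P & norm2 (x - c p) <= e) ->
  exists N : seq 'rV[R]_n, [/\ forall y, y \in N -> S y,
    forall x, S x -> exists2 y, y \in N & norm2 (x - y) <= 2 * e & (size N <= #|P|)%N].
Proof.
move=> cover; pose near p y := S y /\ norm2 (y - c p) <= e.
pose pick p : option 'rV[R]_n :=
  if pselect (exists y, near p y) is left h then Some (proj1_sig (cid h)) else None.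
have pickP p y : pick p = Some y -> near p y.
  by rewrite /pick; case: pselect => // h [<-]; exact: proj2_sig (cid h).
have pick_some p y : near p y -> exists y', pick p = Some y'.
  move=> npy; rewrite /pick; case: pselect => [h|h]; first by eexists.
  by exfalso; apply: h; exists y.
exists (pmap pick (enum P)); split.
- by move=> y; rewrite mem_pmap => /mapP[p _ /esym/pickP[]].
- move=> x Sx; have [p pP xp] := cover x Sx.
  have [y py] := pick_some p x (conj Sx xp).
  exists y; first by rewrite mem_pmap; apply/mapP; exists p; rewrite ?mem_enum.
  have [_ yp] := pickP p y py.
  have -> : x - y = (x - c p) + (c p - y) by rewrite addrA subrK.
  rewrite mulr_natl mulr2n; apply: le_trans (ler_norm2D _ _) _.
  by apply: lerD; rewrite // norm2_distC.
- by rewrite size_pmap cardE count_size.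
Qed.

Section Numerics.
Context {R : realType}.

Lemma expR1_le4 : expR 1 <= 4 :> R.
Proof.
have h := expR_ge1Dx (- 2^-1 : R); rewrite expRN in h.
have e_pos := expR_gt0 (2^-1 : R).
have e_half : expR (2^-1 : R) <= 2.
  by rewrite -lef_pV2 ?posrE //; lra.
have -> : expR (1 : R) = expR 2^-1 * expR 2^-1 by rewrite -expRD; congr expR; lra.
by nra.
Qed.

Lemma inv_ratio_expn_le (m n : nat) : (0 < m)%N ->
  ((m%:R / (m + n)%:R)^-1) ^+ m <= 4 ^+ n :> R.
Proof.
move=> m0; have mp : 0 < m%:R :> R by rewrite ltr0n.
have -> : (m%:R / (m + n)%:R)^-1 = 1 + n%:R / m%:R :> R.
  by rewrite invf_div natrD; field; rewrite gt_eqF.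
apply: (@le_trans _ _ (expR (n%:R / m%:R) ^+ m)).
  by rewrite lerXn2r ?nnegrE ?expR_ge0 ?expR_ge1Dx ?addr_ge0 ?divr_ge0.
rewrite -expRM_natl mulrC mulfVK ?gt_eqF // -[n%:R]mul1r expRM_natr.
by rewrite lerXn2r ?nnegrE ?expR_ge0 ?expR1_le4 //; lra.
Qed.

Lemma coarse_bound_le (D : R) n : 0 <= D ->
  (coarse_bound D n)%:R <= 3 * D * Num.sqrt n%:R + n%:R.
Proof. by move=> D0; rewrite truncn_le addr_ge0 ?mulr_ge0 ?sqrtr_ge0. Qed.

Lemma coarse_bound_gt0 (D : R) n : (0 < n)%N -> 0 <= D -> (0 < coarse_bound D n)%N.
Proof.
move=> n0 D0; rewrite truncn_ge_nat ?addr_ge0 ?mulr_ge0 ?sqrtr_ge0 //.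
by rewrite ler_wpDl ?mulr_ge0 ?sqrtr_ge0 // ler1n.
Qed.

Lemma fine_bound_le (beta : R) : 0 < beta < 2^-1 -> (2 * fine_bound beta)%:R <= 3 * beta^-1.
Proof.
move=> /andP[b0 b1]; have bi2 : 2 <= beta^-1 by rewrite -[2]invrK lef_pV2 ?posrE // ltW.
have ht : (Num.truncn beta^-1)%:R <= beta^-1 by rewrite truncn_le invr_ge0 ltW.
by rewrite natrM /fine_bound -addn1 natrD; lra.
Qed.

Lemma support_factor_le (alpha beta : R) n : 0 <= alpha <= 1 -> 0 < beta < 2^-1 ->
  ((2 * fine_bound beta)%:R) ^+ (support_bound alpha n) <=
  3 ^+ n * powR (beta^-1) (alpha * n%:R) :> R.
Proof.
move=> /andP[a0 a1] /andP[b0 b1].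
have an0 : 0 <= alpha * n%:R by rewrite mulr_ge0.
have K1 : 1 <= (2 * fine_bound beta)%:R :> R by rewrite ler1n.
have bi0 : 0 <= beta^-1 by rewrite invr_ge0 ltW.
have three0 : 0 <= 3 :> R by lra.
rewrite -(powR_mulrn _ (ler0n _ _)).
apply: (@le_trans _ _ (powR ((2 * fine_bound beta)%:R) (alpha * n%:R))).
  by apply: ler_powR => //; rewrite truncn_le.
apply: (@le_trans _ _ (powR (3 * beta^-1) (alpha * n%:R))).
  by apply: ge0_ler_powR; rewrite ?nnegrE ?fine_bound_le ?b0 ?b1 ?mulr_ge0.
rewrite powRM // ler_wpM2r ?powR_ge0 // -powR_mulrn //.
by apply: ler_powR; [lra | rewrite ler_piMl].
Qed.

End Numerics.

Lemma coarse_factor_le {R : realType} (D sa : R) (m n : nat) :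
  (0 < n)%N -> 0 < sa <= D -> sa <= Num.sqrt n%:R -> m%:R <= 3 * D * Num.sqrt n%:R + n%:R ->
  2 * ((1 + m%:R / (m + n)%:R) / (1 - m%:R / (m + n)%:R)) <= 18 * (D / sa).
Proof.
move=> n0 /andP[sa0 saD] san mle.
have np : 0 < n%:R :> R by rewrite ltr0n.
have D0 : 0 < D := lt_le_trans sa0 saD.
have -> : (1 + m%:R / (m + n)%:R) / (1 - m%:R / (m + n)%:R) = (2 * m%:R + n%:R) / n%:R :> R.
  have mn : (m + n)%:R != 0 :> R by rewrite pnatr_eq0 addn_eq0 negb_and -!lt0n n0 orbT.
  by rewrite natrD in mn *; field; rewrite mn gt_eqF.
set s := Num.sqrt n%:R in san mle *.
have s0 : 0 < s by rewrite sqrtr_gt0.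
have ns : n%:R = s ^+ 2 by rewrite sqr_sqrtr ?ler0n.
have ratio : (2 * m%:R + n%:R) / n%:R <= 6 * (D / s) + 3.
  rewrite ler_pdivrMr //.
  have -> : (6 * (D / s) + 3) * n%:R = 6 * D * s + 3 * n%:R.
    by rewrite ns; field; rewrite gt_eqF.
  lra.
have : D / s <= D / sa by rewrite ler_pM2l // lef_pV2.
have : 1 <= D / sa by rewrite ler_pdivlMr // mul1r.
lra.
Qed.

Lemma card_codes_le {R : realType} n (alpha beta D : R) :
  (0 < n)%N -> 0 < alpha < 1 -> 0 < beta < 2^-1 ->
  Num.sqrt (alpha * n%:R) <= D -> 4^-1 <= D ->
  #|lattice_codes n (coarse_bound D n) (fine_bound beta) (support_bound alpha n)|%:R <=
  D / beta * (432 * D / Num.sqrt (alpha * n%:R)) ^+ n * powR (beta^-1) (alpha * n%:R).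
Proof.
move=> n0 /andP[a0 a1] hb hD hD4; have /andP[b0 b1] := hb.
set sa := Num.sqrt (alpha * n%:R) in hD *; set Q := D / sa.
have sa0 : 0 < sa by rewrite sqrtr_gt0 mulr_gt0 // ltr0n.
have D0 : 0 < D := lt_le_trans sa0 hD.
have Q1 : 1 <= Q by rewrite ler_pdivlMr // mul1r.
set m := coarse_bound D n; have m0 : (0 < m)%N by rewrite coarse_bound_gt0 // ltW.
set r : R := m%:R / (m + n)%:R.
have mn0 : 0 < (m + n)%:R :> R by rewrite ltr0n addn_gt0 m0.
have r01 : 0 < r < 1.
  apply/andP; split; first by apply: divr_gt0 => //; rewrite ltr0n.
  by rewrite ltr_pdivrMr // mul1r ltr_nat; lia.
have Cfac0 : 0 <= 2 * ((1 + r) / (1 - r)) by rewrite mulr_ge0 // divr_ge0; lra.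
apply: le_trans (card_codes_le_weighted _ _ _ r01 (ltn0Sn _)) _.
apply: (@le_trans _ _ (4 ^+ n * (3 ^+ n * powR (beta^-1) (alpha * n%:R)) * (18 * Q) ^+ n)).
  have ri0 : 0 <= r^-1 by rewrite invr_ge0; case/andP: r01 => /ltW.
  apply: ler_pM; [by rewrite mulr_ge0 ?exprn_ge0 | exact: exprn_ge0 | |].
    apply: ler_pM; rewrite ?exprn_ge0 //; first exact: inv_ratio_expn_le.
    by rewrite support_factor_le // !ltW.
  apply: lerXn2r; rewrite ?nnegrE //; first by rewrite mulr_ge0 // (le_trans ler01 Q1).
  apply: coarse_factor_le; rewrite ?sa0 ?coarse_bound_le ?(ltW D0) //.
  by rewrite ler_sqrt ?ler0n // ger_pMl ?ltr0n // ltW.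
(* the factor [D / beta >= 1 / 2] is absorbed by [2 ^+ n >= 2] *)
have two_n : 2 <= 2 ^+ n :> R.
  by rewrite -[X in X <= _]expr1 ler_eXn2l // ltr1n.
have Dbeta : 2^-1 <= D / beta by rewrite ler_pdivlMr //; lra.
set X := (4 * 3 * 18 * Q) ^+ n * powR (beta^-1) (alpha * n%:R).
have X0 : 0 <= X.
  by rewrite /X mulr_ge0 ?powR_ge0 // exprn_ge0 // mulr_ge0 // (le_trans ler01 Q1).
have -> : 4 ^+ n * (3 ^+ n * powR beta^-1 (alpha * n%:R)) * (18 * Q) ^+ n = X.
  by rewrite /X !exprMn; ring.
have -> : D / beta * (432 * D / sa) ^+ n * powR beta^-1 (alpha * n%:R) =
    D / beta * 2 ^+ n * X.
  have -> : 432 * D / sa = 2 * (4 * 3 * 18 * Q) by rewrite /Q; ring.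
  by rewrite exprMn /X; ring.
by rewrite ler_peMl //; nra.
Qed.

Theorem claim6p2 (R : realType) :
  exists c : R, 0 < c /\
  forall (n : nat) (alpha beta D : R),
    (1 <= n)%N -> 0 < alpha < 1 -> 0 < beta < 2^-1 ->
    Num.sqrt (alpha * n%:R) <= D ->
    exists N : seq 'rV[R]_n,
      (forall y, y \in N -> S_D alpha beta D y) /\
      (forall x, S_D alpha beta D x ->
         exists2 y, y \in N & norm2 (x - y) <= 6 * beta * Num.sqrt n%:R / D) /\
      (size N)%:R <= D / beta * (c * D / Num.sqrt (alpha * n%:R)) ^+ n
                     * powR (beta^-1) (alpha * n%:R).
Proof.
exists 432; split; first by rewrite ltr0n.
move=> n alpha beta D n1 ha hb hD.
have /andP[a0 _] := ha; have /andP[b0 _] := hb.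
have sa0 : 0 < Num.sqrt (alpha * n%:R) by rewrite sqrtr_gt0 mulr_gt0 ?ltr0n.
have D0 : 0 < D := lt_le_trans sa0 hD.
have [hD4|hD4] := ltP D 4^-1.
  exists [::]; split=> //; split; first by move=> x /(S_D_small hb hD4).
  rewrite [(size _)%:R]/=.
  apply: mulr_ge0; last exact: powR_ge0.
  apply: mulr_ge0; first exact: divr_ge0 (ltW D0) (ltW b0).
  apply: exprn_ge0; apply: divr_ge0 (ltW sa0).
  exact: mulr_ge0 (ler0n _ _) (ltW D0).
have [N [NS Ncover Nsize]] :=
  net_of_cover (fun x => @S_D_near_code R n alpha beta D x hb D0).
exists N; split => //; split.
  move=> x /Ncover[y yN xy]; exists y => //.
  by apply: le_trans xy _; rewrite !mulrA; lra.
by apply: le_trans (card_codes_le n1 ha hb hD hD4); rewrite ler_nat.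
Qed.
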